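(* Let $n\ge 1$, $m,m'\ge0$, $\alpha\in\mathbb{Z}_{\ge0}^m$, $\beta\in\mathbb{Z}_{\ge0}^{m'}$. The dimension of the space of $S_n$-invariants in the homogeneous component of $\mathbb{C}[X_{n\times m};\Theta_{n\times m'}]$ of degree $\alpha$ in the commuting variables and $\beta$ in the Grassmannian variables equals the number of multiset partitions $\pi$ with content $\{\!\{1^{\alpha_1},\dots,m^{\alpha_m},\bar1^{\beta_1},\dots,\overline{m'}^{\beta_{m'}}\}\!\}$ and at most $n$ parts, such that no barred entry occurs more than once in any part, and every part containing an odd number of barred entries occurs at most once in $\pi$. (Equivalently, the $S_n$-invariants of $\mathbb{C}[X_{n\times m};\Theta_{n\times m'}]$ have a basis indexed by such super multiset partitions of length at most $n$.)
   Context: $\mathbb{C}[X_{n\times m};\Theta_{n\times m'}]$ is the associative $\mathbb{C}$-algebra generated by $x_{rk}$ ($1\le r\le n$, $1\le k\le m$) and $\theta_{ri}$ ($1\le r\le n$, $1\le i\le m'$) with: the $x_{rk}$ commute with each other and with all $\theta_{si}$; $\theta_{ri}\theta_{sj}=-\theta_{sj}\theta_{ri}$ for $(r,i)\ne(s,j)$; $\theta_{ri}^2=0$. $S_n$ acts by algebra automorphisms via $\sigma(x_{rk})=x_{\sigma(r)k}$, $\sigma(\theta_{ri})=\theta_{\sigma(r)i}$. The degree-$(\alpha,\beta)$ component is spanned by monomials of total degree $\alpha_k$ in $x_{1k},\dots,x_{nk}$ for each $k$ and $\beta_i$ in $\theta_{1i},\dots,\theta_{ni}$ for each $i$. Multisets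 are over the alphabet $\{1,\dots,m\}\cup\{\bar1,\dots,\overline{m'}\}$, entries $\bar j$ being called barred; a multiset partition of $S$ is a multiset of non-empty multisets (parts) whose multiset union is $S$. *)

From HB Require Import structures.
From mathcomp Require Import all_boot all_order all_algebra all_fingroup all_field.
Set Implicit Arguments. Unset Strict Implicit. Unset Printing Implicit Defensive.
Import GRing.Theory Num.Theory.
Local Open Scope ring_scope.

(* The (alpha,beta)-homogeneous component of C[X_{n x m}; Theta_{n x m'}],  *)
(* described through its monomial basis.                                     *)
(* A monomial is  x^e * theta_T  where e : I_n x I_m -> nat is the exponent  *)
(* matrix and T a subset of I_n x I_m' ; theta_T is the product of the       *)
(* theta_{ri}, (r,i) in T, taken in increasing order of the key r*m'+i.      *)
(* Exponents are bounded by D (any D >= sum alpha is enough to contain the   *)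
(* whole component).                                                         *)

Definition mon (n m m' D : nat) :=
  ({ffun 'I_n * 'I_m -> 'I_D.+1} * {set 'I_n * 'I_m'})%type.

Definition Dbound (m : nat) (alpha : 'I_m -> nat) : nat := (\sum_(k < m) alpha k)%N.

Definition key (n m' : nat) (p : 'I_n * 'I_m') : nat := (p.1 * m' + p.2)%N.

Definition is_deg (n m m' D : nat) (alpha : 'I_m -> nat) (beta : 'I_m' -> nat)
  (mu : mon n m m' D) : bool :=
  [forall k : 'I_m, (\sum_(r < n) (mu.1 (r, k) : nat))%N == alpha k] &&
  [forall i : 'I_m', #|[set r : 'I_n | (r, i) \in mu.2]| == beta i].

(* sigma(x^e theta_T) = sign * x^(e o sigma^-1) theta_(sigma T) *)
Definition mon_act (n m m' D : nat) (s : 'S_n) (mu : mon n m m' D) : mon n m m' D :=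
  ([ffun p : 'I_n * 'I_m => mu.1 ((s^-1)%g p.1, p.2)],
   [set (s p.1, p.2) | p in mu.2]).

(* sign of reordering theta_{s r1 i1} ... theta_{s rk ik} into increasing order *)
Definition theta_sign (n m' : nat) (s : 'S_n) (T : {set 'I_n * 'I_m'}) : algC :=
  (-1) ^+ #|[set pq : ('I_n * 'I_m') * ('I_n * 'I_m') |
             [&& pq.1 \in T, pq.2 \in T, (key pq.1 < key pq.2)%N &
                 (key (s pq.2.1, pq.2.2) < key (s pq.1.1, pq.1.2))%N]]|.

(* matrix of the action of s on the span of all monomials in mon (row vectors) *)
Definition act_mx (n m m' D : nat) (s : 'S_n) : 'M[algC]_#|{: mon n m m' D}| :=
  \matrix_(i, j)
    (if enum_val j == mon_act s (enum_val i) then theta_sign s (enum_val i).2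
     else 0).

(* row space = the (alpha,beta) homogeneous component *)
Definition deg_mx (n m m' : nat) (alpha : 'I_m -> nat) (beta : 'I_m' -> nat)
  : 'M[algC]_#|{: mon n m m' (Dbound alpha)}| :=
  \matrix_(i, j) ((i == j) && is_deg alpha beta (enum_val i))%:R.

Definition inv_dim (n m m' : nat) (alpha : 'I_m -> nat) (beta : 'I_m' -> nat) : nat :=
  \rank (deg_mx n alpha beta
         :&: \bigcap_(s : 'S_n) kermx (act_mx m m' (Dbound alpha) s - 1%:M))%MS.

(* Alphabet: inl k = unbarred letter k, inr i = barred letter bar i.        *)
(* A multiset over the alphabet = multiplicity function; a multiset of parts *)
(* = multiplicity function on parts.  Multiplicities are bounded by the      *)
(* total size tot (harmless: every relevant multiplicity is <= tot).         *)

Definition letter (m m' : nat) := ('I_m + 'I_m')%type.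

Definition tot (m m' : nat) (alpha : 'I_m -> nat) (beta : 'I_m' -> nat) : nat :=
  (\sum_(k < m) alpha k + \sum_(i < m') beta i)%N.

Definition part (m m' t : nat) := {ffun letter m m' -> 'I_t.+1}.

Definition content (m m' : nat) (alpha : 'I_m -> nat) (beta : 'I_m' -> nat)
  (a : letter m m') : nat :=
  match a with inl k => alpha k | inr i => beta i end.

Definition nbarred (m m' t : nat) (p : part m m' t) : nat :=
  (\sum_(i < m') (p (inr i) : nat))%N.

Definition is_super_msp (n m m' : nat) (alpha : 'I_m -> nat) (beta : 'I_m' -> nat)
  (P : {ffun part m m' (tot alpha beta) -> 'I_(tot alpha beta).+1}) : bool :=
  [&&
      [forall p, (P p > 0)%N ==> [exists a, (p a > 0)%N]],
      [forall a, (\sum_p (P p : nat) * (p a : nat))%N == content alpha beta a],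
      ((\sum_p (P p : nat))%N <= n)%N,
      [forall p, (P p > 0)%N ==> [forall i : 'I_m', (p (inr i) <= 1)%N]] &
      [forall p, odd (nbarred p) ==> ((P p : nat) <= 1)%N]].

Definition num_super_msp (n m m' : nat) (alpha : 'I_m -> nat) (beta : 'I_m' -> nat)
  : nat := #|[pred P | @is_super_msp n m m' alpha beta P]|.

From mathcomp Require Import all_boot all_order all_algebra all_fingroup all_field.
From mathcomp Require Import zify.
Set Implicit Arguments. Unset Strict Implicit. Unset Printing Implicit Defensive.
Import GRing.Theory Num.Theory.

(* The S_n-action on the monomial basis of the (alpha, beta)-component is a
   monomial representation: sigma sends a basis monomial to a basis monomial
   times the sign of reordering its theta-factors, and these signs form a
   cocycle.  Over a field of characteristic 0 the invariants of such a
   representation have a basis of signed orbit sums, one for each orbit whose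
   stabiliser acts with trivial sign; the other orbits contribute nothing.
   Reading a monomial row by row gives a multiset of nonempty parts: two
   monomials lie in the same orbit iff these multisets agree, and the multisets
   that occur are the multiset partitions with at most n parts and no barred
   letter repeated inside a part.  The sign of a permutation counts, mod 2, the
   pairs of rows with an odd number of thetas that it inverts; so a stabiliser
   fixing every such row has sign 1, while the transposition of two equal such
   rows stabilises the monomial with sign -1. *)

Lemma card_set_sum (X : finType) (P : pred X) :
  #|[set x | P x]| = (\sum_x P x)%N.
Proof.
by rewrite -sum1_card big_mkcond; apply: eq_bigr => x _; rewrite inE; case: (P x).
Qed.

Lemma odd_card_fixpoints (X : finType) (f : X -> X) (A : {set X}) :
  {in A, forall x, f x \in A} -> {in A, forall x, f (f x) = x} ->
  odd #|A| = odd #|A :&: [set x | f x == x]|.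
Proof.
set F := [set x | f x == x].
have [N] := ubnP #|A|; elim: N A => // N IH A ltAN fA fK.
have [->|[x xA]] := set_0Vmem A; first by rewrite set0I.
set S := [set x; f x]; set B := A :\: S.
have SA : S \subset A by rewrite subUset !sub1set xA fA.
have fB : {in B, forall y, f y \in B}.
  move=> y /setDP[yA yS]; rewrite in_setD fA // andbT !inE.
  apply: contra yS; rewrite !inE => /orP[] /eqP fy; apply/orP; [right | left].
    by rewrite -fy fK.
  by rewrite -(fK y yA) fy fK.
have cardA : #|A| = (#|S| + #|B|)%N by rewrite -(cardsID S A) (setIidPr SA).
have ltBN : (#|B| < N)%N.
  have : (0 < #|S|)%N by apply/card_gt0P; exists x; rewrite !inE eqxx.
  move: ltAN; rewrite cardA; lia.
have cardAF : #|A :&: F| = (#|S :&: F| + #|B :&: F|)%N.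
  rewrite -(cardsID S (A :&: F)) setIAC (setIidPr SA); congr (_ + _)%N.
  apply: eq_card => y; rewrite /B !(in_setD, in_setI).
  by case: (y \in A); case: (y \in F); case: (y \in S).
have oddS : odd #|S| = odd #|S :&: F|.
  have [fx | fxx] := eqVneq (f x) x.
    rewrite /S fx setUid; suff -> : [set x] :&: F = [set x] by [].
    by apply/setIidPl; rewrite sub1set inE fx.
  suff -> : S :&: F = set0 by rewrite cards2 eq_sym fxx cards0.
  apply/setP => y; rewrite !inE; apply/negbTE/andP => -[/orP[] /eqP -> ].
    by rewrite (negbTE fxx).
  by rewrite fK // eq_sym (negbTE fxx).
rewrite cardA cardAF !oddD -oddS (IH B) //.
by move=> y /setDP[yA _]; apply: fK.
Qed.

Lemma sum_pairE (I J : finType) (F : I * J -> nat) :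
  (\sum_p F p = \sum_i \sum_j F (i, j))%N.
Proof. by rewrite pair_bigA; apply: eq_bigr => -[]. Qed.

Lemma sum_fibers (I J : finType) (f : I -> J) (g : J -> nat) :
  (\sum_i g (f i) = \sum_j #|[set i | f i == j]| * g j)%N.
Proof.
rewrite (partition_big f xpredT) //=; apply: eq_bigr => j _.
rewrite (eq_bigr (fun _ => g j)) => [|i /eqP <-] //.
by rewrite sum_nat_const cardsE.
Qed.

Lemma count_mktuple (n : nat) (T : finType) (f : 'I_n -> T) x :
  count_mem x (mktuple f) = #|[set i | f i == x]|.
Proof.
rewrite -sum1_count /= big_map big_enum_cond /= sum1_card.
by apply: eq_card => i; rewrite !inE.
Qed.

Section Inversions.
Variables (X : finType) (w : X -> nat).
Hypothesis w_inj : injective w.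

Definition inversions (g : X -> X) (T : {set X}) : nat :=
  #|[set pq : X * X | [&& pq.1 \in T, pq.2 \in T, w pq.1 < w pq.2
                         & w (g pq.2) < w (g pq.1)]]|.

Lemma ltn_weight_swap (g : X -> X) x y : injective g -> x != y ->
  (w (g y) < w (g x)) = ~~ (w (g x) < w (g y)).
Proof.
move=> g_inj xy; have : w (g x) != w (g y) by rewrite (inj_eq w_inj) (inj_eq g_inj).
by rewrite ltnNge leq_eqVlt => /negbTE ->.
Qed.

Lemma sum_pairs_ordered (F : X * X -> nat) : (forall x, F (x, x) = 0) ->
  (\sum_pq F pq = \sum_pq (w pq.1 < w pq.2) * (F pq + F (pq.2, pq.1)))%N.
Proof.
move=> F0; have swap_inj : injective (fun pq : X * X => (pq.2, pq.1)).
  by move=> [? ?] [? ?] [-> ->].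
rewrite (eq_bigr (fun pq => (w pq.1 < w pq.2) * F pq + (w pq.2 < w pq.1) * F pq)%N).
  rewrite big_split /= [X in (_ + X)%N](reindex_inj swap_inj) -big_split /=.
  by apply: eq_bigr => pq _; rewrite mulnDr.
move=> [x y] _ /=; have [-> | xy] := eqVneq x y; first by rewrite F0 !muln0.
by rewrite (@ltn_weight_swap id x y) //; case: (w x < w y); rewrite ?mul1n ?mul0n ?addn0.
Qed.

Lemma odd_inversions_comp (g h : X -> X) T : injective g -> injective h ->
  odd (inversions (h \o g) T) = odd (inversions g T + inversions h (g @: T)).
Proof.
move=> g_inj h_inj.
have gg_inj : injective (fun pq : X * X => (g pq.1, g pq.2)).
  by move=> [? ?] [? ?] [/g_inj -> /g_inj ->].
rewrite /inversions !card_set_sum [X in (_ + X)%N](reindex_inj gg_inj) /=.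
rewrite [X in (_ + X)%N]sum_pairs_ordered => [|x]; last by rewrite /= ltnn !(andbF, andFb).
rewrite [X in (X + _)%N]sum_pairs_ordered => [|x]; last by rewrite /= ltnn !(andbF, andFb).
rewrite [in LHS]sum_pairs_ordered => [|x]; last by rewrite /= ltnn !(andbF, andFb).
rewrite -big_split /= !(big_morph odd oddD (erefl : odd 0 = false)).
apply: eq_bigr => -[x y] _ /=.
have [-> | xy] := eqVneq x y; first by rewrite ltnn.
have gxy : g x != g y by rewrite (inj_eq g_inj).
rewrite !mem_imset // (@ltn_weight_swap id x y) // (ltn_weight_swap g_inj xy).
rewrite (ltn_weight_swap h_inj gxy).
by case: (x \in T); case: (y \in T); case: (w x < w y); case: (w (g x) < w (g y));
   case: (w (h (g x)) < w (h (g y))).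
Qed.

End Inversions.

Section MonomialRepresentation.
Variables (F : fieldType) (gT : finGroupType) (X : finType).
Hypothesis F_char0 : [pchar F]%R =i pred0.
Variable act : X -> gT -> X.
Hypothesis act1 : forall x, act x 1%g = x.
Hypothesis actM : forall x g h, act (act x g) h = act x (g * h)%g.
Variable sign : gT -> X -> F.
Hypothesis signM : forall g h x, sign (g * h)%g x = (sign g x * sign h (act x g))%R.
Variable Y : pred X.
Hypothesis Y_act : forall x g, Y (act x g) = Y x.

Local Notation N := #|{: X}|.
Local Open Scope ring_scope.
Implicit Types (x y : X) (g h : gT) (u : 'rV[F]_N).

Definition monomial_mx g : 'M[F]_N :=
  \matrix_(i, j) (if enum_val j == act (enum_val i) g then sign g (enum_val i) else 0).

Definition support_mx : 'M[F]_N := \matrix_(i, j) ((i == j) && Y (enum_val i))%:R.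

Definition invariant_mx :=
  (support_mx :&: \bigcap_(g : gT) kermx (monomial_mx g - 1%:M))%MS.

Definition sign_trivial x := [forall g, (act x g == x) ==> (sign g x == 1)].

Lemma act_inj g : injective (act^~ g).
Proof. by apply: (@can_inj _ _ _ (act^~ g^-1)%g) => x; rewrite /= actM mulgV act1. Qed.

Lemma monomial_mxE g x y :
  monomial_mx g (enum_rank x) (enum_rank y) = if y == act x g then sign g x else 0.
Proof. by rewrite mxE !enum_rankK. Qed.

Lemma monomial_mxM g h : monomial_mx g *m monomial_mx h = monomial_mx (g * h)%g.
Proof.
apply/matrixP => i j; rewrite !mxE (bigD1 (enum_rank (act (enum_val i) g))) //=.
rewrite big1 ?addr0 => [|k /negbTE kg]; last first.
  by rewrite mxE -(inj_eq enum_rank_inj) enum_valK kg mul0r.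
rewrite !mxE enum_rankK eqxx actM signM.
by case: eqP => _; rewrite ?mulr0.
Qed.

Lemma sub_invariant_mx u : (u <= invariant_mx)%MS =
  (u <= support_mx)%MS && [forall g, u *m monomial_mx g == u].
Proof.
rewrite sub_capmx; congr andb; apply/sub_bigcapmxP/forallP => u_inv g.
  by move: (u_inv g isT); rewrite sub_kermx mulmxBr mulmx1 subr_eq0.
by move=> _; rewrite sub_kermx mulmxBr mulmx1 subr_eq0; apply: u_inv.
Qed.

Lemma invariant_coordE u g x : u *m monomial_mx g = u ->
  u 0 (enum_rank (act x g)) = sign g x * u 0 (enum_rank x).
Proof.
move=> u_inv; rewrite -{1}u_inv mxE (bigD1 (enum_rank x)) //= big1 ?addr0.
  by rewrite monomial_mxE eqxx mulrC.
move=> i /negbTE ix; rewrite -[i]enum_valK monomial_mxE.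
case: eqP => [/act_inj ex | _]; last by rewrite mulr0.
by rewrite ex enum_valK eqxx in ix.
Qed.

Lemma support_coord u x : (u <= support_mx)%MS -> ~~ Y x -> u 0 (enum_rank x) = 0.
Proof.
move=> /submxP[v ->] Yx; rewrite mxE big1 // => i _; rewrite mxE.
by case: eqP => [-> | _]; rewrite ?enum_rankK ?(negbTE Yx) ?andbF mulr0.
Qed.

Lemma sub_support_mx u :
  (forall x, ~~ Y x -> u 0 (enum_rank x) = 0) -> (u <= support_mx)%MS.
Proof.
move=> u_Y; suff -> : u = u *m support_mx by apply: submxMl.
apply/rowP => j; rewrite !mxE (bigD1 j) //= big1 ?addr0 => [|i /negbTE ij]; last first.
  by rewrite mxE ij mulr0.
rewrite mxE eqxx /=; case Yj: (Y _); first by rewrite mulr1.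
by rewrite mulr0 -[j]enum_valK u_Y ?Yj.
Qed.

Lemma invariant_coord_nontrivial u x :
  (u <= invariant_mx)%MS -> ~~ sign_trivial x -> u 0 (enum_rank x) = 0.
Proof.
rewrite sub_invariant_mx => /andP[_ /forallP u_inv] /forallPn[g].
rewrite negb_imply => /andP[/eqP gx sg1].
have := invariant_coordE x (eqP (u_inv g)); rewrite gx => /eqP.
by rewrite -subr_eq0 -{1}[u 0 _]mul1r -mulrBl mulf_eq0 subr_eq0 eq_sym (negbTE sg1) => /eqP.
Qed.

Definition orbit_vec x : 'rV[F]_N := \sum_g row (enum_rank x) (monomial_mx g).

Lemma orbit_vecE x y :
  orbit_vec x 0 (enum_rank y) = \sum_g (if y == act x g then sign g x else 0).
Proof. by rewrite summxE; apply: eq_bigr => g _; rewrite mxE monomial_mxE. Qed.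

Lemma orbit_vec_invariant x : Y x -> (orbit_vec x <= invariant_mx)%MS.
Proof.
move=> Yx; rewrite sub_invariant_mx; apply/andP; split.
  apply: sub_support_mx => y Yy; rewrite orbit_vecE big1 // => g _.
  by case: eqP => // yxg; rewrite yxg Y_act Yx in Yy.
apply/forallP => g; rewrite /orbit_vec mulmx_suml [X in _ == X](reindex_inj (mulIg g)).
by apply/eqP/eq_bigr => h _; rewrite -row_mul monomial_mxM.
Qed.

Lemma orbit_vec_out x y : (forall g, act x g != y) -> orbit_vec x 0 (enum_rank y) = 0.
Proof.
by move=> xy; rewrite orbit_vecE big1 // => g _; rewrite eq_sym (negbTE (xy g)).
Qed.

Lemma orbit_vec_self x : sign_trivial x -> orbit_vec x 0 (enum_rank x) != 0.
Proof.
move=> /forallP x_triv; rewrite orbit_vecE.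
rewrite (eq_bigr (fun g => (x == act x g)%:R)) => [|g _]; last first.
  by case: eqP => // xg; rewrite (eqP (implyP (x_triv g) _)) // -xg.
by rewrite -natr_sum (pcharf0P _).1 // -lt0n (bigD1 1%g) //= act1 eqxx.
Qed.

Section Transversal.
Variable R : {set X}.
Hypothesis R_Y : {subset R <= Y}.
Hypothesis R_trivial : {in R, forall r, sign_trivial r}.
Hypothesis R_cover :
  forall x, Y x -> sign_trivial x -> exists2 r, r \in R & exists g, x = act r g.
Hypothesis R_sep : {in R &, forall r r' g, act r g = r' -> r = r'}.

Lemma invariant_eq0 u : (u <= invariant_mx)%MS ->
  (forall r, r \in R -> u 0 (enum_rank r) = 0) -> u = 0.
Proof.
move=> u_inv uR0; have := u_inv; rewrite sub_invariant_mx => /andP[u_Y /forallP u_g].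
apply/rowP => j; rewrite mxE -[j]enum_valK; set x := enum_val j.
have [Yx | ] := boolP (Y x); last exact: support_coord.
have [x_triv | ] := boolP (sign_trivial x); last exact: invariant_coord_nontrivial.
have [r rR [g ->]] := R_cover Yx x_triv.
by rewrite (invariant_coordE r (eqP (u_g g))) uR0 ?mulr0.
Qed.

Definition orbit_basis : 'M[F]_(#|R|, N) := \matrix_(j, c) orbit_vec (enum_val j) 0 c.

Definition transversal_coords : 'M[F]_(N, #|R|) :=
  \matrix_(c, j) (c == enum_rank (enum_val j))%:R.

Lemma transversal_coordsE u j :
  (u *m transversal_coords) 0 j = u 0 (enum_rank (enum_val j)).
Proof.
rewrite mxE (bigD1 (enum_rank (enum_val j))) //= big1 ?addr0 => [|c /negbTE cj].
  by rewrite mxE eqxx mulr1.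
by rewrite mxE cj mulr0.
Qed.

Lemma orbit_basis_coords : orbit_basis *m transversal_coords =
  diag_mx (\row_j orbit_vec (enum_val j) 0 (enum_rank (enum_val j))).
Proof.
apply/matrixP => j j'; rewrite !mxE (bigD1 (enum_rank (enum_val j'))) //=.
rewrite big1 ?addr0 => [|c /negbTE cj']; last first.
  by rewrite [transversal_coords _ _]mxE cj' mulr0.
rewrite !mxE eqxx mulr1; have [<- | jj'] := eqVneq j j'; first by rewrite mulr1n.
rewrite mulr0n orbit_vec_out // => g; apply: contra jj' => /eqP/R_sep r_eq.
by apply/eqP/enum_val_inj/r_eq; apply: enum_valP.
Qed.

Theorem rank_invariant_mx : \rank invariant_mx = #|R|.
Proof.
have rank_basis : \rank orbit_basis = #|R|.
  apply/eqP; rewrite eqn_leq rank_leq_row /=.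
  apply: leq_trans (mxrankM_maxl orbit_basis transversal_coords).
  rewrite orbit_basis_coords mxrank_unit // unitmxE det_diag unitfE.
  apply/prodf_neq0 => j _; rewrite mxE; apply: orbit_vec_self.
  by apply: R_trivial; apply: enum_valP.
have basis_invariant : (orbit_basis <= invariant_mx)%MS.
  apply/row_subP => j; rewrite (_ : row j _ = orbit_vec (enum_val j)).
    by apply: orbit_vec_invariant; apply: R_Y; apply: enum_valP.
  by apply/rowP => c; rewrite !mxE.
have ker0 : \rank (invariant_mx :&: kermx transversal_coords) = 0%N.
  apply/eqP; rewrite mxrank_eq0; apply/eqP/row_matrixP => i; rewrite row0.
  apply: invariant_eq0; first exact: submx_trans (row_sub i _) (capmxSl _ _).
  move=> r rR; rewrite -(enum_rankK_in rR rR) -transversal_coordsE.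
  have /(submx_trans (row_sub i _)) := capmxSr invariant_mx (kermx transversal_coords).
  by rewrite sub_kermx => /eqP ->; rewrite mxE.
apply/eqP; rewrite eqn_leq -{1}(mxrank_mul_ker invariant_mx transversal_coords) ker0 addn0.
by rewrite rank_leq_col -{1}rank_basis mxrankS.
Qed.
End Transversal.

End MonomialRepresentation.

Section ThetaSign.
Variables n m' : nat.
Implicit Types (p q : 'I_n * 'I_m') (T : {set 'I_n * 'I_m'}) (s : 'S_n).

Lemma key_ltE p q :
  (key p < key q) = (p.1 < q.1) || (p.1 == q.1 :> nat) && (p.2 < q.2).
Proof.
case: p q => [[a Ha] [b Hb]] [[c Hc] [d Hd]]; rewrite /key /=.
case: (ltngtP a c) => [ac|ca|<-] /=; last by rewrite ltn_add2l.
  by apply/idP; nia.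
by apply/negbTE; rewrite -leqNgt; nia.
Qed.

Lemma key_inj : injective (@key n m').
Proof.
move=> [a i] [b j]; rewrite /key /= => E.
have m'_gt0 : 0 < m' by apply: leq_ltn_trans (ltn_ord i).
have Ei : i = j :> nat by move/(congr1 (modn^~ m')): E; rewrite !modnMDl !modn_small.
have Ea : a = b :> nat.
  by move/(congr1 (divn^~ m')): E; rewrite !divnMDl // !divn_small // !addn0.
by rewrite (val_inj Ea) (val_inj Ei).
Qed.

Definition rowperm s p := (s p.1, p.2).
Arguments rowperm : simpl never.

Lemma rowperm_inj s : injective (rowperm s).
Proof. by move=> [a i] [b j] [/perm_inj -> ->]. Qed.

Lemma theta_signE s T : theta_sign s T = ((-1) ^+ inversions (@key n m') (rowperm s) T)%R.
Proof. by []. Qed.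

Lemma theta_signM s t T :
  theta_sign (s * t)%g T = (theta_sign s T * theta_sign t (rowperm s @: T))%R.
Proof.
rewrite !theta_signE -exprD -signr_odd -[RHS]signr_odd.
rewrite -(odd_inversions_comp key_inj T (@rowperm_inj s) (@rowperm_inj t)).
by congr (_ ^+ odd _)%R; apply: eq_card => pq; rewrite !inE /rowperm /= !permM.
Qed.

Definition row_size T r := #|[set i | (r, i) \in T]|.

Lemma inversions_rowperm s T : inversions (@key n m') (rowperm s) T =
  (\sum_(a : 'I_n) \sum_(b : 'I_n)
     ((a < b) && (s b < s a)) * (row_size T a * row_size T b))%N.
Proof.
rewrite /inversions card_set_sum sum_pairE.
under eq_bigr do rewrite sum_pairE.
rewrite sum_pairE; under eq_bigr do rewrite exchange_big /=.
apply: eq_bigr => a _; apply: eq_bigr => b _.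
rewrite /row_size !card_set_sum big_distrl big_distrr /=; apply: eq_bigr => i _.
rewrite !big_distrr /=; apply: eq_bigr => j _; rewrite !key_ltE /=.
have sE : (s b == s a :> nat) = (b == a :> nat) by rewrite !val_eqE (inj_eq perm_inj).
rewrite sE; case: (ltngtP a b) => [ab | ba | /val_inj ab].
- by case: ((a, i) \in T); case: ((b, j) \in T); case: (s b < s a).
- by rewrite /= !andbF.
- by subst b; rewrite ltnn /=; case: ltngtP; rewrite ?andbF.
Qed.

Lemma theta_sign_fix_odd_rows s T :
  (forall r, odd (row_size T r) -> s r = r) -> theta_sign s T = 1%R.
Proof.
move=> s_odd; rewrite theta_signE -signr_odd inversions_rowperm.
rewrite (_ : odd _ = false) //; apply/negbTE; rewrite -dvdn2.
apply: dvdn_sum => a _; apply: dvdn_sum => b _.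
case: andP => [[ab sba] | _]; last by rewrite mul0n.
rewrite mul1n dvdn2 oddM; apply: contraL sba => /andP[/s_odd -> /s_odd ->].
by rewrite -leqNgt ltnW.
Qed.

Lemma theta_sign_tperm (r r' : 'I_n) T : r < r' ->
  (forall i, ((r, i) \in T) = ((r', i) \in T)) -> odd (row_size T r) ->
  theta_sign (tperm r r') T = (-1)%R.
Proof.
move=> rr' Trr' odd_r; set t := tperm r r'.
have r'r : r' != r by rewrite -val_eqE /= gtn_eqF.
have tT p : (rowperm t p \in T) = (p \in T).
  by case: p => a i; rewrite /rowperm /=; case: tpermP => [-> | -> |]; rewrite ?Trr'.
have ttK p : rowperm t (rowperm t p) = p by case: p => a i; rewrite /rowperm /= tpermK.
have key_t p : (key p < key (rowperm t p)) = (p.1 == r).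
  case: p => a i; rewrite /rowperm key_ltE /=.
  case: tpermP => [-> | -> | /eqP/negbTE -> _]; first by rewrite rr' eqxx.
    by rewrite ltnNge ltnW // (negbTE r'r) ltnn andbF.
  by rewrite !ltnn andbF.
(* The involution (p, q) |-> (t q, t p) of the inversion pairs of t fixes
   exactly the pairs ((r, i), (r', i)). *)
rewrite theta_signE -signr_odd /inversions.
rewrite (odd_card_fixpoints (f := fun pq => (rowperm t pq.2, rowperm t pq.1))).
- have t_r i : rowperm t (r, i) = (r', i) by rewrite /rowperm /= tpermL.
  have t_r' i : rowperm t (r', i) = (r, i) by rewrite /rowperm /= tpermR.
  rewrite (_ : _ :&: _ = [set ((r, i), (r', i)) | i in [set i | (r, i) \in T]]).
    by rewrite card_imset -/(row_size T r) ?odd_r // => i j [].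
  apply/setP => -[p q]; rewrite !inE /=.
  apply/andP/imsetP => [[/and3P[pT _ /andP[pq _]] /eqP[_ qE]] | [i]].
    move: pq; rewrite -qE key_t; case: p pT {qE} => a i /= aiT /eqP ar; subst a.
    by exists i; rewrite ?inE ?t_r.
  rewrite inE => iT [-> ->]; rewrite t_r t_r' -Trr' iT key_ltE rr' !eqxx.
  by split.
- by move=> [p q]; rewrite !inE /= !tT !ttK => /and4P[-> -> -> ->].
- by move=> [p q] _ /=; rewrite !ttK.
Qed.
End ThetaSign.

Section Monomials.
Variables (n m m' : nat) (alpha : 'I_m -> nat) (beta : 'I_m' -> nat).
Local Notation D := (Dbound alpha).
Local Notation t := (tot alpha beta).
Local Notation mon := (mon n m m' D).
Local Notation part := (part m m' t).
Local Notation msp := {ffun part -> 'I_t.+1}.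
Local Notation is_deg := (is_deg alpha beta).
Implicit Types (mu nu : mon) (s : 'S_n) (p : part) (P : msp).

Lemma mon_act1 mu : mon_act 1 mu = mu.
Proof.
case: mu => e T; congr pair; first by apply/ffunP => -[r k]; rewrite ffunE invg1 perm1.
by rewrite -[RHS]imset_id; apply: eq_imset => -[r i]; rewrite /= perm1.
Qed.

Lemma mon_actM s s' mu : mon_act s' (mon_act s mu) = mon_act (s * s') mu.
Proof.
congr pair; first by apply/ffunP => p; rewrite !ffunE invMg permM.
by rewrite -imset_comp; apply: eq_imset => p; rewrite /= permM.
Qed.

Lemma mem_mon_act s mu r i : ((r, i) \in (mon_act s mu).2) = ((s^-1 r, i) \in mu.2)%g.
Proof.
have -> : (r, i) = rowperm s (s^-1 r, i)%g by rewrite /rowperm /= permKV.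
exact: (mem_imset _ _ (@rowperm_inj n m' s)).
Qed.

Lemma is_deg_act s mu : is_deg (mon_act s mu) = is_deg mu.
Proof.
congr andb; apply: eq_forallb => k; congr (_ == _).
  by rewrite (reindex_inj (@perm_inj _ s)); apply: eq_bigr => r _; rewrite ffunE /= permK.
rewrite -[RHS](card_preimset _ (@perm_inj _ s^-1)%g); apply: eq_card => r.
by rewrite !inE mem_mon_act.
Qed.

Lemma alpha_le_D k : alpha k <= D.
Proof. by rewrite /Dbound (bigD1 k) //= leq_addr. Qed.

Lemma D_le_t : D <= t.
Proof. exact: leq_addr. Qed.

Lemma content_le_t a : content alpha beta a <= t.
Proof.
case: a => [k | i] /=; first exact: leq_trans (alpha_le_D k) D_le_t.
by apply: leq_trans (leq_addl _ _); rewrite (bigD1 i) //= leq_addr.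
Qed.

Lemma is_degP mu : reflect
  ((forall k, \sum_r (mu.1 (r, k) : nat) = alpha k) /\
   (forall i, #|[set r | (r, i) \in mu.2]| = beta i)) (is_deg mu).
Proof.
apply: (iffP andP) => [[/forallP E1 /forallP E2] | [E1 E2]].
  by split=> x; apply/eqP.
by split; apply/forallP => x; apply/eqP.
Qed.

Definition mon_row mu (r : 'I_n) : part := [ffun a =>
  match a with inl k => inord (mu.1 (r, k)) | inr i => inord ((r, i) \in mu.2) end].

Lemma mon_row_act s mu r : mon_row (mon_act s mu) r = mon_row mu (s^-1 r)%g.
Proof. by apply/ffunP => -[k | i]; rewrite !ffunE // mem_mon_act. Qed.

Lemma mon_row_inl mu r k : mon_row mu r (inl k) = mu.1 (r, k) :> nat.
Proof.
by rewrite ffunE inordK // ltnS (leq_trans _ D_le_t) // -ltnS.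
Qed.

(* The degree hypothesis rules out truncation by [inord] when [t = 0]. *)
Lemma mon_row_inr mu r i : is_deg mu -> mon_row mu r (inr i) = ((r, i) \in mu.2) :> nat.
Proof.
move=> /is_degP[_ E2]; rewrite ffunE inordK // ltnS; case ri: (_ \in _) => //=.
apply: leq_trans (content_le_t (inr i)); rewrite /= -E2.
by apply/card_gt0P; exists r; rewrite inE.
Qed.

Lemma mon_row_inj mu nu : is_deg mu -> is_deg nu -> mon_row mu =1 mon_row nu -> mu = nu.
Proof.
case: mu nu => [e T] [e' T'] dmu dnu rows; congr pair.
  apply/ffunP => -[r k]; apply/val_inj.
  by have := mon_row_inl (e, T) r k; rewrite rows mon_row_inl.
apply/setP => -[r i].
have := mon_row_inr r i dmu; rewrite rows mon_row_inr //=.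
by case: ((r, i) \in T); case: ((r, i) \in T').
Qed.

Lemma mon_row_sum mu a : is_deg mu ->
  \sum_r (mon_row mu r a : nat) = content alpha beta a.
Proof.
move=> dmu; have /is_degP[E1 E2] := dmu; case: a => [k | i] /=.
  by rewrite -E1; apply: eq_bigr => r _; rewrite mon_row_inl.
by rewrite -E2 card_set_sum; apply: eq_bigr => r _; rewrite mon_row_inr.
Qed.

Lemma nbarred_mon_row mu r : is_deg mu -> nbarred (mon_row mu r) = row_size mu.2 r.
Proof.
by move=> dmu; rewrite /row_size card_set_sum; apply: eq_bigr => i _; rewrite mon_row_inr.
Qed.

Definition empty_part : part := [ffun => ord0].

Lemma nonempty_partE p : [exists a, 0 < p a] = (p != empty_part).
Proof.
apply/idP/idP => [/existsP[a pa] | ]; first by apply: contraTneq pa => ->; rewrite ffunE.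
apply: contraNT => /existsPn p0; apply/eqP/ffunP => a; apply/val_inj.
by move: (p0 a); rewrite ffunE lt0n negbK => /eqP.
Qed.

Definition row_mult mu p := #|[set r | mon_row mu r == p]|.

(* Empty rows only pad the partition to n rows and are not recorded. *)
Definition row_msp mu : msp :=
  [ffun p => inord (if p != empty_part then row_mult mu p else 0)].

Lemma row_mult_act s mu p : row_mult (mon_act s mu) p = row_mult mu p.
Proof.
rewrite /row_mult -[RHS](card_preimset _ (@perm_inj _ s^-1)%g); apply: eq_card => r.
by rewrite !inE mon_row_act.
Qed.

Lemma row_msp_act s mu : row_msp (mon_act s mu) = row_msp mu.
Proof. by apply/ffunP => p; rewrite !ffunE row_mult_act. Qed.

Lemma row_mult_le mu p : is_deg mu -> p != empty_part -> row_mult mu p <= t.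
Proof.
move=> dmu; rewrite -nonempty_partE => /existsP[a pa].
apply: leq_trans (content_le_t a); rewrite -(mon_row_sum a dmu) /row_mult card_set_sum.
by apply: leq_sum => r _; case: eqP => // ->.
Qed.

Lemma row_mspE mu p : is_deg mu ->
  row_msp mu p = (if p != empty_part then row_mult mu p else 0) :> nat.
Proof.
by move=> dmu; rewrite ffunE inordK // ltnS; case: ifP => // /(row_mult_le dmu).
Qed.

Definition is_row_msp P :=
  [&& [forall p, (P p > 0) ==> [exists a, (p a > 0)]],
      [forall a, (\sum_p (P p : nat) * (p a : nat)) == content alpha beta a],
      ((\sum_p (P p : nat)) <= n) &
      [forall p, (P p > 0) ==> [forall i : 'I_m', (p (inr i) <= 1)]]].

Definition odd_parts_simple P := [forall p, odd (nbarred p) ==> (P p <= 1)].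

Lemma is_super_mspE P : is_super_msp n P = is_row_msp P && odd_parts_simple P.
Proof. by rewrite /is_super_msp /is_row_msp /odd_parts_simple !andbA. Qed.

Lemma is_row_mspP P : reflect
  [/\ forall p, 0 < P p -> p != empty_part,
      forall a, \sum_p (P p : nat) * (p a : nat) = content alpha beta a,
      \sum_p (P p : nat) <= n &
      forall p, 0 < P p -> forall i, p (inr i) <= 1]
  (is_row_msp P).
Proof.
apply: (iffP and4P) => [[/forallP P1 /forallP P2 P3 /forallP P4] | [P1 P2 P3 P4]].
  split=> //.
  - by move=> p /(implyP (P1 p)); rewrite nonempty_partE.
  - by move=> a; apply/eqP.
  - by move=> p /(implyP (P4 p)) /forallP.
split=> //.
- by apply/forallP => p; apply/implyP => /P1; rewrite nonempty_partE.
- by apply/forallP => a; apply/eqP.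
- by apply/forallP => p; apply/implyP => /P4 Pp; apply/forallP.
Qed.

Lemma is_row_msp_row_msp mu : is_deg mu -> is_row_msp (row_msp mu).
Proof.
move=> dmu; apply/and4P; split.
- apply/forallP => p; apply/implyP; rewrite row_mspE // nonempty_partE.
  by case: ifP.
- apply/forallP => a; apply/eqP; rewrite -(mon_row_sum a dmu).
  rewrite (sum_fibers (mon_row mu) (fun p => p a : nat)); apply: eq_bigr => p _.
  rewrite row_mspE //; case: ifP => [_ | /negbFE/eqP ->]; first by [].
  by rewrite ffunE !muln0.
- rewrite -[n]card_ord -sum1_card (sum_fibers (mon_row mu) (fun _ => 1)).
  apply: leq_sum => p _; rewrite row_mspE // muln1; by case: ifP.
- apply/forallP => p; apply/implyP; rewrite row_mspE //.
  case: ifP => // _ /card_gt0P[r]; rewrite inE => /eqP <-.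
  by apply/forallP => i; rewrite mon_row_inr //; case: (_ \in _).
Qed.

Lemma sum_row_mult mu : \sum_p row_mult mu p = n.
Proof.
have := sum_fibers (mon_row mu) (fun _ => 1); rewrite sum1_card card_ord => ->.
by apply: eq_bigr => p _; rewrite muln1.
Qed.

Lemma row_msp_orbit mu nu : is_deg mu -> is_deg nu ->
  row_msp mu = row_msp nu -> exists s, nu = mon_act s mu.
Proof.
move=> dmu dnu E.
have mult_ne p : p != empty_part -> row_mult mu p = row_mult nu p.
  by move=> p0; have := congr1 (fun P : msp => P p : nat) E; rewrite /= !row_mspE // p0.
have mult_eq p : row_mult mu p = row_mult nu p.
  have [-> | /mult_ne //] := eqVneq p empty_part.
  have := sum_row_mult mu; rewrite -(sum_row_mult nu) (bigD1 empty_part) //=.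
  rewrite [in RHS](bigD1 empty_part) //= (eq_bigr (row_mult nu)) => [|q /mult_ne //].
  by move/eqP; rewrite eqn_add2r => /eqP.
have /tuple_permP[s rowsE] : perm_eq (mktuple (mon_row mu)) (mktuple (mon_row nu)).
  by apply/allP => p _ /=; rewrite !count_mktuple; apply/eqP/mult_eq.
exists s; apply: mon_row_inj; rewrite ?is_deg_act // => r; rewrite mon_row_act.
have := congr1 (fun u : n.-tuple part => tnth u (s^-1 r)%g) (val_inj rowsE).
by rewrite !tnth_mktuple permKV.
Qed.

Definition parts_seq P : seq part := flatten [seq nseq (P p) p | p <- enum part].

Lemma sum_parts_seq P (F : part -> nat) :
  \sum_(x <- parts_seq P) F x = \sum_p P p * F p.
Proof.
rewrite big_flatten /= big_map big_enum /=; apply: eq_bigr => p _.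
by rewrite big_nseq iter_addn_0 mulnC.
Qed.

Lemma mem_parts_seq P x : x \in parts_seq P -> 0 < P x.
Proof. by move=> /flattenP[_ /mapP[p _ ->] /nseqP[-> ]]. Qed.

Lemma size_parts_seq P : size (parts_seq P) = \sum_p (P p : nat).
Proof. by rewrite -sum1_size sum_parts_seq; apply: eq_bigr => p _; rewrite muln1. Qed.

Local Notation row_of P r := (nth empty_part (parts_seq P) r).

Lemma sum_row_of P (F : part -> nat) : F empty_part = 0 -> size (parts_seq P) <= n ->
  \sum_(r < n) F (row_of P r) = \sum_(x <- parts_seq P) F x.
Proof.
move=> F0 size_le; rewrite (big_nth empty_part).
rewrite -(big_mkord xpredT (fun r => F (row_of P r))).
rewrite (big_cat_nat _ size_le) //= [X in _ + X]big1_seq ?addn0 // => r /andP[_].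
by rewrite mem_index_iota => /andP[size_r _]; rewrite nth_default.
Qed.

Lemma row_of_le P r a : is_row_msp P -> row_of P r a <= content alpha beta a.
Proof.
move=> /is_row_mspP[_ Pcontent _ _].
have [size_le | /(mem_nth empty_part)/mem_parts_seq Pr] := leqP (size (parts_seq P)) r.
  by rewrite nth_default // ffunE.
rewrite -Pcontent (bigD1 (row_of P r)) //=.
by apply: leq_trans (leq_addr _ _); rewrite leq_pmull.
Qed.

Lemma row_of_barred P r i : is_row_msp P -> row_of P r (inr i) <= 1.
Proof.
move=> /is_row_mspP[_ _ _ Pbarred].
have [size_le | /(mem_nth empty_part)/mem_parts_seq Pr] := leqP (size (parts_seq P)) r.
  by rewrite nth_default // ffunE.
exact: Pbarred.
Qed.

Definition msp_mon P : mon :=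
  ([ffun x : 'I_n * 'I_m => inord (row_of P x.1 (inl x.2))],
   [set x : 'I_n * 'I_m' | 0 < row_of P x.1 (inr x.2)]).

Lemma mon_row_msp_mon P r : is_row_msp P -> mon_row (msp_mon P) r = row_of P r.
Proof.
move=> PP; apply/ffunP => -[k | i]; rewrite !ffunE /=.
  rewrite inordK ?inord_val // ltnS.
  exact: leq_trans (row_of_le r (inl k) PP) (alpha_le_D k).
rewrite inE /=; apply/val_inj; have := row_of_barred r i PP.
by case: (row_of P r (inr i)) => -[| [|x]] //= lt1 _; rewrite inordK.
Qed.

Lemma msp_mon_deg P : is_row_msp P -> is_deg (msp_mon P).
Proof.
move=> PP; have /is_row_mspP[_ Pcontent Pn _] := PP.
have rows_le : size (parts_seq P) <= n by rewrite size_parts_seq.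
apply/is_degP; split=> [k | i].
  rewrite -[alpha k]/(content alpha beta (inl k)) -Pcontent -sum_parts_seq.
  rewrite -sum_row_of ?ffunE //.
  by apply: eq_bigr => r _; rewrite -mon_row_inl mon_row_msp_mon.
rewrite -[beta i]/(content alpha beta (inr i)) -Pcontent -sum_parts_seq.
rewrite -sum_row_of ?ffunE //.
rewrite card_set_sum; apply: eq_bigr => r _; rewrite inE /=.
by have := row_of_barred r i PP; case: (row_of P r (inr i)) => -[| [|x]].
Qed.

Lemma row_msp_mon P : is_row_msp P -> row_msp (msp_mon P) = P.
Proof.
move=> PP; have /is_row_mspP[Pne _ Pn _] := PP.
apply/ffunP => p; apply/val_inj; rewrite /= row_mspE ?msp_mon_deg //.
have [p0 | /negbNE/eqP ->] := boolP (p != empty_part); last first.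
  by case: (posnP (P empty_part)) => // /Pne; rewrite eqxx.
rewrite /row_mult card_set_sum.
under eq_bigr do rewrite mon_row_msp_mon //.
rewrite (sum_row_of (F := fun x => x == p : nat)) ?size_parts_seq //; last first.
  by rewrite eq_sym (negbTE p0).
rewrite sum_parts_seq (bigD1 p) //= eqxx muln1 big1 ?addn0 // => q /negbTE qp.
by rewrite qp muln0.
Qed.

Lemma mon_row_stab s mu r : mon_act s mu = mu -> mon_row mu (s r) = mon_row mu r.
Proof. by move=> fix_mu; rewrite -{1}fix_mu mon_row_act permK. Qed.

Lemma odd_nbarred_nonempty p : odd (nbarred p) -> p != empty_part.
Proof. by apply: contraTN => /eqP ->; rewrite /nbarred big1 // => i _; rewrite ffunE. Qed.

Lemma theta_sign_stab s mu : is_deg mu -> odd_parts_simple (row_msp mu) ->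
  mon_act s mu = mu -> theta_sign s mu.2 = 1%R.
Proof.
move=> dmu simple fix_mu; apply: theta_sign_fix_odd_rows => r odd_r.
have odd_row : odd (nbarred (mon_row mu r)) by rewrite nbarred_mon_row.
have := implyP (forallP simple (mon_row mu r)) odd_row.
rewrite row_mspE // (odd_nbarred_nonempty odd_row) => mult_le1.
apply/eqP; apply: contraTT mult_le1 => sr; rewrite -ltnNge.
by apply/card_gt1P; exists r, (s r); rewrite !inE mon_row_stab // eqxx eq_sym sr.
Qed.

Lemma theta_sign_stab_neg mu : is_deg mu -> ~~ odd_parts_simple (row_msp mu) ->
  exists2 s, mon_act s mu = mu & theta_sign s mu.2 = (-1)%R.
Proof.
move=> dmu /forallPn[p]; rewrite negb_imply -ltnNge => /andP[odd_p].
rewrite row_mspE // (odd_nbarred_nonempty odd_p) => /card_gt1P[x [y [xp yp xy]]].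
move: xp yp; rewrite !inE => /eqP xp /eqP yp.
wlog lt_xy : x y xp yp xy / x < y.
  move=> IH; case: (ltngtP x y) => [lt_xy | lt_yx | /val_inj exy]; first exact: (IH x y).
    by apply: (IH y x) => //; rewrite eq_sym.
  by rewrite exy eqxx in xy.
exists (tperm x y).
  apply: mon_row_inj; rewrite ?is_deg_act // => r; rewrite mon_row_act tpermV.
  by case: tpermP => [-> | -> |] //; rewrite xp yp.
apply: theta_sign_tperm => [// | i |]; last by rewrite -nbarred_mon_row // xp.
have := mon_row_inr x i dmu; rewrite xp -yp mon_row_inr //.
by case: (_ \in _); case: (_ \in _).
Qed.

End Monomials.

Section MonomialOrbits.
Variables (n m m' : nat) (alpha : 'I_m -> nat) (beta : 'I_m' -> nat).
Local Notation mon := (mon n m m' (Dbound alpha)).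
Local Notation is_deg := (is_deg alpha beta).
Local Notation act := (fun (mu : mon) s => mon_act s mu).
Local Notation sign := (fun s (mu : mon) => theta_sign s mu.2).
Local Notation super_msps := [set P | is_super_msp n (alpha:=alpha) (beta:=beta) P].
Local Notation msp_mon := (@msp_mon n m m' alpha beta).
Implicit Types (mu nu : mon).

Lemma inv_dimE : inv_dim n alpha beta = \rank (invariant_mx act sign is_deg).
Proof. by []. Qed.

Lemma sign_trivial_monE mu : is_deg mu ->
  sign_trivial act sign mu = odd_parts_simple (row_msp beta mu).
Proof.
move=> dmu; apply/forallP/idP => [triv | simple s].
  apply: contraT => /(theta_sign_stab_neg dmu)[s fix_mu sgn].
  by have := triv s; rewrite /= fix_mu eqxx sgn eqNr oner_eq0.
by apply/implyP => /eqP fix_mu; apply/eqP; apply: theta_sign_stab dmu simple fix_mu.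
Qed.

Lemma num_super_mspE : num_super_msp n alpha beta = #|super_msps|.
Proof. by apply: eq_card => P; rewrite inE. Qed.

Lemma msp_mon_inj : {in super_msps &, injective msp_mon}.
Proof.
move=> P Q; rewrite !inE !is_super_mspE => /andP[PP _] /andP[QQ _] PQ.
by rewrite -(row_msp_mon PP) PQ row_msp_mon.
Qed.

Local Notation transversal := (msp_mon @: super_msps).

Lemma transversal_deg : {subset transversal <= is_deg}.
Proof.
by move=> x /imsetP[P]; rewrite inE is_super_mspE => /andP[PP _] ->; apply: msp_mon_deg.
Qed.

Lemma transversal_sign_trivial : {in transversal, forall r, sign_trivial act sign r}.
Proof.
move=> x /imsetP[P]; rewrite inE is_super_mspE => /andP[PP simple] ->.
by rewrite (sign_trivial_monE (msp_mon_deg PP)) row_msp_mon.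
Qed.

Lemma transversal_cover mu : is_deg mu -> sign_trivial act sign mu ->
  exists2 r, r \in transversal & exists s, mu = mon_act s r.
Proof.
move=> dmu triv; have PP := is_row_msp_row_msp dmu.
have simple : odd_parts_simple (row_msp beta mu) by rewrite -sign_trivial_monE.
exists (msp_mon (row_msp beta mu)); first by apply: imset_f; rewrite inE is_super_mspE PP.
exact: row_msp_orbit (msp_mon_deg PP) dmu (row_msp_mon PP).
Qed.

Lemma transversal_sep : {in transversal &, forall r r' s, mon_act s r = r' -> r = r'}.
Proof.
move=> _ _ /imsetP[P + ->] /imsetP[Q + ->] s E; rewrite !inE !is_super_mspE.
move=> /andP[PP _] /andP[QQ _]; congr (msp_mon _).
by rewrite -(row_msp_mon PP) -(row_msp_mon QQ) -E row_msp_act.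
Qed.

End MonomialOrbits.

Theorem corollary4p1 (n m m' : nat) (alpha : 'I_m -> nat) (beta : 'I_m' -> nat) :
  (0 < n)%N -> inv_dim n alpha beta = num_super_msp n alpha beta.
Proof.
move=> _; rewrite inv_dimE num_super_mspE -(card_in_imset (@msp_mon_inj n m m' alpha beta)).
apply: rank_invariant_mx.
- exact: pchar_num.
- exact: mon_act1.
- by move=> mu s t /=; rewrite mon_actM.
- by move=> s t mu; apply: theta_signM.
- by move=> mu s; apply: is_deg_act.
- exact: transversal_deg.
- exact: transversal_sign_trivial.
- exact: transversal_cover.
- exact: transversal_sep.
Qed.
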